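(* Let $A \in \mathbb{C}^{n \times n}$ and let $\beta \geq 1$ be a real number bounding the spectral radius of $A$ (i.e. every eigenvalue $\lambda$ of $A$ satisfies $|\lambda| \le \beta$). Let $\mu_A(X) = \sum_{i=0}^{d} m_i X^i$ be the minimal polynomial of $A$, of degree $d$. Then for all $i$, $$|m_i| \leq \begin{cases} \beta^d & \text{if } d \leq \beta, \\ \min\left\{ \sqrt{\beta d}^{\,d}\ ;\ \sqrt{\frac{2}{d\pi}}\, 2^d \beta^d \right\} & \text{otherwise.} \end{cases}$$
   Context: The minimal polynomial of $A$ is the monic polynomial of least degree annihilating $A$. *)

From HB Require Import structures.
From mathcomp Require Import all_boot all_order all_algebra.
From mathcomp Require Import complex.
From mathcomp Require Import all_classical all_reals.
From mathcomp Require Import trigo.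
Set Implicit Arguments. Unset Strict Implicit. Unset Printing Implicit Defensive.
Import Order.TTheory GRing.Theory Num.Theory.
Local Open Scope ring_scope.

Definition minpoly_coef_bound (R : realType) (beta : R) (d : nat) : R :=
  if d%:R <= beta then beta ^+ d
  else Order.min (Num.sqrt (beta * d%:R) ^+ d)
                 (Num.sqrt (2 / (d%:R * pi)) * 2 ^+ d * beta ^+ d).

From HB Require Import structures.
From mathcomp Require Import all_boot all_order all_algebra.
From mathcomp Require Import complex.
From mathcomp Require Import all_classical all_reals.
From mathcomp Require Import trigo.
From mathcomp Require Import ring lra zify.
From mathcomp Require Import normedtype derive.
Import Order.TTheory GRing.Theory Num.Theory.
Import numFieldNormedType.Exports.

(* Over an algebraically closed field the minimal polynomial is the product of
   the X - lambda over its roots, which are eigenvalues, so Vieta's formulas give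
   |m_i| <= C(d, i) beta^(d - i).  When d <= beta this is at most
   d^i beta^(d - i) <= beta^d.  Otherwise, squaring and using
   C(d, i) <= d^(min(i, d - i)) gives sqrt(beta d)^d, while
   C(d, i) <= C(d, d/2) together with Wallis' inequality
   pi m C(2m, m)^2 <= 16^m, obtained by comparing the integrals of sin^n over
   [0, pi/2] for consecutive n, gives sqrt(2/(d pi)) 2^d beta^d. *)

Lemma bin_leq_expn n k : 'C(n, k) <= n ^ k.
Proof.
rewrite -(leq_pmul2r (fact_gt0 k)) bin_ffact ffact_prod.
apply: (@leq_trans (\prod_(i < k) n)); last first.
  by rewrite prod_nat_const card_ord leq_pmulr ?fact_gt0.
by apply: leq_prod => i _; rewrite leq_subr.
Qed.

Lemma bin_leq_expn_sub n k : k <= n -> 'C(n, k) <= n ^ (n - k).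
Proof. by move=> le_kn; rewrite -bin_sub // bin_leq_expn. Qed.

Lemma bin_leq_binS n k : k < n./2 -> 'C(n, k) <= 'C(n, k.+1).
Proof.
move=> lt_k_half; rewrite -(leq_pmul2l (ltn0Sn k)) mul_bin_left leq_mul2r.
by rewrite (_ : k < n - k) ?orbT //; have := odd_double_half n; lia.
Qed.

Lemma bin_leq_half n k : 'C(n, k) <= 'C(n, n./2).
Proof.
wlog le_k_half : k / k <= n./2.
  move=> bin_le; case: (leqP k n./2) => [|lt_half_k]; first exact: bin_le.
  case: (leqP k n) => [le_kn|lt_nk]; last by rewrite bin_small.
  by rewrite -bin_sub //; apply: bin_le; have := odd_double_half n; lia.
rewrite -(subKn le_k_half); elim: (n./2 - k) (leq_subr k n./2) => [|m IHm] le_m.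
  by rewrite subn0.
apply: leq_trans (IHm (ltnW le_m)).
have -> : n./2 - m = (n./2 - m.+1).+1 by lia.
by apply: bin_leq_binS; lia.
Qed.

Lemma bin_oddS_half m : 'C(m.*2.+1, m.+1) = 'C(m.*2.+1, m).
Proof.
have sub_m : m.*2.+1 - m = m.+1 by lia.
by rewrite -{1}sub_m bin_sub //; lia.
Qed.

Lemma bin_doubleS_half m : 'C(m.*2.+2, m.+1) = ('C(m.*2.+1, m)).*2.
Proof. by rewrite binS bin_oddS_half addnn. Qed.

Lemma mul_bin_double m : m.+1 * 'C(m.+1.*2, m.+1) = 2 * (m.*2.+1 * 'C(m.*2, m)).
Proof.
have := mul_bin_diag m.*2.+1 m; rewrite /= bin_oddS_half.
by rewrite doubleS bin_doubleS_half; lia.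
Qed.

Local Open Scope ring_scope.

Section SinePowerPrimitive.
Variable R : realType.

Fixpoint int_sinX (n : nat) : R -> R :=
  match n with
  | 0 => id
  | 1 => fun x => 1 - cos x
  | m.+2 => fun x =>
      - (sin x ^+ m.+1 * cos x) / m.+2%:R + m.+1%:R / m.+2%:R * int_sinX m x
  end.

Lemma is_derive_sinX k (x : R) :
  is_derive x 1 (fun y => sin y ^+ k) (k%:R * sin x ^+ k.-1 * cos x).
Proof.
rewrite (_ : (fun y => sin y ^+ k) = (@sin R) ^+ k); last first.
  by apply/funext => y; rewrite exprfctE.
by apply: is_derive_eq; rewrite /GRing.scale /= mulrC mulrA.
Qed.

Lemma is_derive_int_sinX n (x : R) : is_derive x 1 (int_sinX n) (sin x ^+ n).
Proof.
elim/ltn_ind: n => -[_|[_|m IHm]] /=.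
- by rewrite expr0; apply: is_derive_id.
- rewrite (_ : (fun x => 1 - cos x) = cst 1 - (@cos R)) //.
  by apply: is_derive_eq; rewrite expr1 sub0r opprK.
have m_ge0 := ler0n R m.
rewrite (_ : (fun x => _)
             = (- m.+2%:R^-1) *: ((fun y => sin y ^+ m.+1) * (@cos R))
               + (m.+1%:R / m.+2%:R) *: int_sinX m); last first.
  by apply/funext => y; rewrite !fctE /GRing.scale /=; field; lra.
apply: is_derive_eq.
  apply: is_deriveD (is_deriveZ _ (IHm m (leqnSn _))).
  exact: is_deriveZ (is_deriveM (is_derive_sinX _ _) (is_derive_cos x)).
rewrite /GRing.scale /= !exprS.
have cos2 : cos x ^+ 2 = 1 - sin x ^+ 2 by rewrite sin2cos2; ring.
rewrite (_ : cos x * _ = m.+1%:R * sin x ^+ m * cos x ^+ 2); last by ring.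
by rewrite cos2; field; lra.
Qed.

Lemma int_sinX0 n : int_sinX n 0 = 0.
Proof.
elim/ltn_ind: n => -[_|[_|m IHm]] //=; first by rewrite cos0 subrr.
by rewrite sin0 expr0n /= mul0r oppr0 mul0r add0r IHm ?mulr0.
Qed.

Lemma int_sinX_pihalfSS n :
  int_sinX n.+2 (pi / 2) = n.+1%:R / n.+2%:R * int_sinX n (pi / 2).
Proof. by rewrite /= cos_pihalf mulr0 oppr0 mul0r add0r. Qed.

(* Mean value theorem, as [sin ^+ n.+1 <= sin ^+ n] on [0, pi/2]. *)
Lemma int_sinX_pihalf_decr n : int_sinX n.+1 (pi / 2) <= int_sinX n (pi / 2).
Proof.
rewrite -subr_ge0; set G := int_sinX n - int_sinX n.+1.
have dG (x : R) : is_derive x 1 G (sin x ^+ n - sin x ^+ n.+1).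
  exact: is_deriveB (is_derive_int_sinX n x) (is_derive_int_sinX n.+1 x).
have G_derivable (x : R) : derivable G x 1 by have [] := dG x.
have cG := @derivable_within_continuous R R G `[0, pi / 2]%R
  (fun x _ => G_derivable x).
have pihalf_gt0 : 0 < pi / 2 :> R by rewrite divr_gt0 ?pi_gt0.
have [c] := MVT pihalf_gt0 (fun x _ => dG x) cG.
rewrite in_itv /= => /andP[c_gt0 c_lt] mvt.
have -> : int_sinX n (pi / 2) - int_sinX n.+1 (pi / 2) = G (pi / 2) - G 0.
  by rewrite /G !fctE !int_sinX0 subrr subr0.
rewrite mvt subr0 mulr_ge0 ?divr_ge0 ?pi_ge0 //.
have sin_gt0 : 0 < sin c by apply: sin_gt0_pihalf; rewrite c_gt0 c_lt.
rewrite exprS -{1}(mul1r (sin c ^+ n)) -mulrBl mulr_ge0 ?subr_ge0 ?sin_le1 //.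
by rewrite exprn_ge0 // ltW.
Qed.

Lemma int_sinX_pihalf_even m :
  int_sinX m.*2 (pi / 2) * 4 ^+ m = pi / 2 * ('C(m.*2, m))%:R.
Proof.
elim: m => [|m IHm]; first by rewrite expr0 bin0 !mulr1.
have mulC := congr1 (GRing.natmul (1 : R)) (mul_bin_double m).
rewrite doubleS int_sinX_pihalfSS -doubleS exprS.
move: IHm mulC; set a := int_sinX _ _; set C := 'C(m.*2, m); set C' := 'C(_, _).
rewrite !natrM -!muln2 => IHm mulC.
apply: (mulIf (_ : m.+1%:R != 0)); first by rewrite pnatr_eq0.
transitivity ((m * 2).+1%:R / (m.+1 * 2)%:R * 4 * m.+1%:R * (a * 4 ^+ m)).
  by ring.
transitivity (pi / 2 * (m.+1%:R * C'%:R) : R); last by ring.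
have m_ge0 := ler0n R m.
by rewrite IHm mulC; field; apply/eqP; lra.
Qed.

Lemma int_sinX_pihalf_odd m :
  int_sinX m.*2.+1 (pi / 2) * (m.*2.+1)%:R * ('C(m.*2, m))%:R = 4 ^+ m.
Proof.
elim: m => [|m IHm].
  by rewrite /= cos_pihalf subr0 expr0 bin0 mulr1 mul1r.
have mulC := congr1 (GRing.natmul (1 : R)) (mul_bin_double m).
rewrite doubleS int_sinX_pihalfSS -doubleS exprS -IHm.
move: mulC; set b := int_sinX _ _; set C := 'C(m.*2, m); set C' := 'C(_, _).
rewrite !natrM -!muln2 => mulC.
have m_ge0 := ler0n R m.
transitivity (2 * b * (m.+1%:R * C'%:R)); first by field; apply/eqP; lra.
by rewrite mulC; ring.
Qed.

Lemma wallis_central_bin m : pi * m%:R * ('C(m.*2, m))%:R ^+ 2 <= 16 ^+ m :> R.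
Proof.
case: m => [|k]; first by rewrite mulr0 mul0r expr0 ler01.
have even := int_sinX_pihalf_even k.+1.
have odd := int_sinX_pihalf_odd k.
have decr := int_sinX_pihalf_decr k.*2.+1.
have mulC := congr1 (GRing.natmul (1 : R)) (mul_bin_double k).
move: even odd decr mulC; rewrite -doubleS.
set a := int_sinX _ _; set b := int_sinX _ _.
set C := 'C(k.*2, k); set C' := 'C(_, _).
rewrite !natrM => even odd decr mulC.
have lhsE :
    pi * k.+1%:R * C'%:R ^+ 2 = 4 * 4 ^+ k.+1 * (a * (k.*2.+1)%:R * C%:R).
  transitivity (2 * (pi / 2 * C'%:R) * (k.+1%:R * C'%:R) : R); first by field.
  by rewrite -even mulC; ring.
have rhsE : 16 ^+ k.+1 = 4 * 4 ^+ k.+1 * (b * (k.*2.+1)%:R * C%:R) :> R.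
  by rewrite odd mulrAC -exprS -exprMn; congr (_ ^+ _); lra.
rewrite lhsE rhsE; apply: ler_wpM2l; first by rewrite mulr_ge0 ?exprn_ge0 ?ler0n.
by apply: ler_wpM2r; [|apply: ler_wpM2r]; rewrite ?ler0n.
Qed.

End SinePowerPrimitive.

Section CentralBinomial.
Variable R : realType.

Lemma central_bin_sqr_le d : (0 < d)%N ->
  ('C(d, d./2))%:R ^+ 2 * (d%:R * pi) <= 2 * 4 ^+ d :> R.
Proof.
have pow4_double m : 4 ^+ m.*2 = 16 ^+ m :> R.
  by rewrite -mul2n exprM; congr (_ ^+ _); rewrite expr2; lra.
move=> d_gt0; have := odd_double_half d.
case: (odd d) => /=; move: d./2 => m dE; subst d.
- have W := wallis_central_bin R m.+1.
  rewrite doubleS bin_doubleS_half [16 ^+ _]exprS in W.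
  move: W; set c := 'C(m.*2.+1, m); rewrite -mul2n natrM => W.
  have pic_ge0 : 0 <= pi * c%:R ^+ 2 :> R by rewrite mulr_ge0 ?pi_ge0 ?exprn_ge0.
  have mpic_ge0 := mulr_ge0 (ler0n R m) pic_ge0.
  rewrite (_ : pi * _ * _ = 4 * m.+1%:R * (pi * c%:R ^+ 2)) in W; last by ring.
  rewrite add1n [4 ^+ _]exprS pow4_double -muln2.
  rewrite (_ : _ * _ = (m * 2).+1%:R * (pi * c%:R ^+ 2)); last by ring.
  lra.
- case: m d_gt0 => [|m] // _; have W := wallis_central_bin R m.+1.
  move: W; rewrite add0n pow4_double; set C := 'C(_, _); rewrite -muln2 => W.
  rewrite (_ : _ * _ = 2 * (pi * m.+1%:R * C%:R ^+ 2)); last by ring.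
  lra.
Qed.

Lemma bin_le_central_bound d k : (0 < d)%N ->
  ('C(d, k))%:R <= Num.sqrt (2 / (d%:R * pi)) * 2 ^+ d :> R.
Proof.
move=> d_gt0; have dpi_gt0 : 0 < d%:R * pi :> R.
  by rewrite mulr_gt0 ?ltr0n ?pi_gt0.
apply: (le_trans (_ : _ <= ('C(d, d./2))%:R)).
  by rewrite ler_nat bin_leq_half.
rewrite -ler_sqr ?nnegrE ?mulr_ge0 ?sqrtr_ge0 ?exprn_ge0 ?ler0n //.
rewrite exprMn sqr_sqrtr; last by rewrite divr_ge0 ?ltW.
rewrite -exprM mulnC exprM (_ : 2 ^+ 2 = 4 :> R); last by rewrite expr2; lra.
by rewrite mulrAC ler_pdivlMr // central_bin_sqr_le.
Qed.

End CentralBinomial.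

Section VietaBound.
Variable R : numDomainType.

Lemma norm_coef_prod_XsubC_le (s : seq R) (b : R) k :
  (forall z, z \in s -> `|z| <= b) ->
  `|(\prod_(z <- s) ('X - z%:P))`_k|
    <= ('C(size s, k))%:R * b ^+ (size s - k).
Proof.
move=> le_s_b; set n := size s.
have [lt_n_k|le_k_n] := ltnP n k.
  by rewrite bin_small // mul0r nth_default ?normr0 // size_prod_XsubC.
have prod_le (I : {set 'I_n}) :
    #|I| == (n - k)%N -> `|\prod_(i in I) s`_i| <= b ^+ (n - k).
  move=> /eqP <-; rewrite normr_prod -prodr_const; apply: ler_prod => i _.
  by rewrite normr_ge0 le_s_b ?mem_nth.
rewrite coef_prod_XsubC // normrM normrX normrN normr1 expr1n mul1r.
apply: le_trans (ler_norm_sum _ _ _) _.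
apply: le_trans (ler_sum _ (fun I => prod_le I)) _.
rewrite (eq_bigl (mem [set I : {set 'I_n} | #|I| == (n - k)%N])); last first.
  by move=> I; rewrite !inE.
by rewrite sumr_const card_draws card_ord bin_sub // mulr_natl.
Qed.

End VietaBound.

Lemma norm_coef_mxminpoly_le
    {C : numClosedFieldType} {n} {A : 'M[C]_n.+1} {b : C} :
  (forall lambda, eigenvalue A lambda -> `|lambda| <= b) ->
  forall i, `|(mxminpoly A)`_i| <=
    ('C((size (mxminpoly A)).-1, i))%:R * b ^+ ((size (mxminpoly A)).-1 - i).
Proof.
move=> le_eigen_b i.
have [r] := closed_field_poly_normal (mxminpoly A).
rewrite (monicP (mxminpoly_monic A)) scale1r => minpolyE.
rewrite minpolyE size_prod_XsubC /=; apply: norm_coef_prod_XsubC_le => z z_r.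
by apply: le_eigen_b; rewrite eigenvalue_root_min minpolyE root_prod_XsubC.
Qed.

Lemma bin_mul_expn_le_expn (R : realDomainType) (b : R) d i :
  d%:R <= b -> ('C(d, i))%:R * b ^+ (d - i) <= b ^+ d.
Proof.
move=> le_d_b; have b_ge0 : 0 <= b := le_trans (ler0n R d) le_d_b.
have [lt_d_i|le_i_d] := ltnP d i; first by rewrite bin_small // mul0r exprn_ge0.
rewrite -[in X in _ <= X](subnKC le_i_d) exprD.
apply: ler_wpM2r; first exact: exprn_ge0.
apply: le_trans (_ : d%:R ^+ i <= _).
  by rewrite -natrX ler_nat bin_leq_expn.
by rewrite lerXn2r ?nnegrE ?ler0n.
Qed.

Lemma bin_mul_expn_le_sqrt (R : rcfType) (b : R) d i : 1 <= b -> b <= d%:R ->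
  ('C(d, i))%:R * b ^+ (d - i) <= Num.sqrt (b * d%:R) ^+ d.
Proof.
move=> b_ge1 le_b_d; have b_ge0 : 0 <= b := le_trans ler01 b_ge1.
have bd_ge1 : 1 <= b * d%:R.
  by apply: le_trans b_ge1 (ler_peMr b_ge0 (le_trans b_ge1 le_b_d)).
have [lt_d_i|le_i_d] := ltnP d i.
  by rewrite bin_small // mul0r exprn_ge0 ?sqrtr_ge0.
rewrite -ler_sqr ?nnegrE ?mulr_ge0 ?exprn_ge0 ?sqrtr_ge0 ?ler0n //.
rewrite exprAC sqr_sqrtr ?mulr_ge0 ?ler0n //.
move: le_b_d bd_ge1; have [j ->] : exists j, d = (i + j)%N.
  by exists (d - i)%N; rewrite subnKC.
rewrite addKn; set D := (i + j)%:R => le_b_D bD_ge1.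
have le_sqr_bin k : ('C(i + j, i) <= (i + j) ^ k)%N ->
    (('C(i + j, i))%:R * b ^+ j) ^+ 2 <= (D ^+ k * b ^+ j) ^+ 2.
  move=> le_bin; rewrite lerXn2r ?nnegrE ?mulr_ge0 ?exprn_ge0 ?ler0n //.
  by rewrite ler_wpM2r ?exprn_ge0 // /D -natrX ler_nat.
have [le_j_i|lt_i_j] := leqP j i.
  apply: le_trans (le_sqr_bin j _) _.
    by rewrite -[X in (_ ^ X)%N](addKn i j) bin_leq_expn_sub ?leq_addr.
  by rewrite -exprMn -exprM mulrC ler_weXn2l //; lia.
apply: le_trans (le_sqr_bin i (bin_leq_expn _ _)) _.
have [t tE] : exists t, j = (i + t)%N by exists (j - i)%N; rewrite subnKC // ltnW.
rewrite [in X in _ <= X]tE [in X in X <= _]tE.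
rewrite (_ : (D ^+ i * b ^+ (i + t)) ^+ 2
             = (b * D) ^+ (i + i) * (b ^+ t * b ^+ t)).
  rewrite (_ : (b * D) ^+ (i + (i + t))
               = (b * D) ^+ (i + i) * (b ^+ t * D ^+ t)).
    apply: ler_wpM2l; first by rewrite exprn_ge0 // mulr_ge0 ?ler0n.
    by apply: ler_wpM2l; rewrite ?exprn_ge0 ?lerXn2r ?nnegrE ?ler0n.
  by rewrite !exprMn !exprD; ring.
by rewrite !exprMn !exprD; ring.
Qed.

Lemma bin_mul_expn_le_central (R : realType) (b : R) d i :
  1 <= b -> (0 < d)%N ->
  ('C(d, i))%:R * b ^+ (d - i) <= Num.sqrt (2 / (d%:R * pi)) * 2 ^+ d * b ^+ d.
Proof.
move=> b_ge1 d_gt0; apply: ler_pM; rewrite ?ler0n ?exprn_ge0 ?(le_trans ler01) //.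
  exact: bin_le_central_bound.
by rewrite ler_weXn2l ?leq_subr.
Qed.

Lemma bin_mul_expn_le_minpoly_coef_bound (R : realType) (b : R) d i : 1 <= b ->
  ('C(d, i))%:R * b ^+ (d - i) <= minpoly_coef_bound b d.
Proof.
move=> b_ge1; rewrite /minpoly_coef_bound; case: ifPn => [|/negbTE].
  exact: bin_mul_expn_le_expn.
rewrite leNgt => /negbFE lt_b_d.
have d_gt0 : (0 < d)%N.
  by rewrite -(ltr0n R) (lt_trans (lt_le_trans ltr01 b_ge1)).
by rewrite le_min bin_mul_expn_le_sqrt ?(ltW lt_b_d) // bin_mul_expn_le_central.
Qed.

Theorem lemma3 (R : realType) (n : nat) (A : 'M[R[i]]_n.+1) (beta : R) :
  1 <= beta ->
  (forall lambda : R[i], eigenvalue A lambda -> `|lambda| <= beta%:C%C) ->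
  forall i : nat,
    `|(mxminpoly A)`_i| <=
      (minpoly_coef_bound beta (size (mxminpoly A)).-1)%:C%C.
Proof.
move=> beta_ge1 le_eigen_beta i.
apply: le_trans (norm_coef_mxminpoly_le le_eigen_beta i) _.
set d := (size _).-1.
have -> : ('C(d, i))%:R * beta%:C%C ^+ (d - i)
          = (('C(d, i))%:R * beta ^+ (d - i))%:C%C.
  by rewrite rmorphM rmorphXn rmorph_nat.
by rewrite lecR bin_mul_expn_le_minpoly_coef_bound.
Qed.
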